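(* Let $G$ be a bipartite edge-magic simple graph with stable sets $X$ and $Y$, and suppose $G\cong H_1\oplus H_2$ is a decomposition of $G$. Then $\lim_{n\to\infty}|\tau_{S_{2n}(G;H_1,H_2)}|=\infty$.
   Context: For a $(p,q)$-graph $G$ ($p$ vertices, $q$ edges), an edge-magic labeling is a bijection $f:V(G)\cup E(G)\to[1,p+q]$ such that $f(x)+f(xy)+f(y)$ equals a constant (the valence) for every edge $xy$. For a graph $H$, $\tau_H$ is the set of integers that are valences of edge-magic labelings of $H$. A decomposition $G\cong H_1\oplus H_2$ means $H_1,H_2$ are subgraphs of $G$ whose edge sets partition $E(G)$. Writing $X=\{x_i\}_{i=1}^s$, $Y=\{y_j\}_{j=1}^t$, $S_{2n}(G;H_1,H_2)$ is the graph with vertex set $X\cup Y\cup\bigcup_{k=1}^n X_k\cup\bigcup_{k=1}^n Y_k$, where $X_k=\{x_i^k\}_{i=1}^s$, $Y_k=\{y_j^k\}_{j=1}^t$ are new vertices, and edge set $E(G)\cup\{x_iy_j^k: x_iy_j\in E(H_1),\,k\in[1,n]\}\cup\{x_i^ky_j: x_iy_j\in E(H_2),\,k\in[1,n]\}$. *)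

From mathcomp Require Import all_boot.
Set Implicit Arguments. Unset Strict Implicit. Unset Printing Implicit Defensive.

(* A simple graph on a finite vertex type V is given by an adjacency relation r
   (in our uses r is symmetric and irreflexive by construction). *)
Definition edges (V : finType) (r : rel V) : {set {set V}} :=
  [set A : {set V} | [exists x : V, exists y : V, r x y && (A == [set x; y])]].

Definition lab_dom (V : finType) (r : rel V) : finType :=
  (V + {A : {set V} | A \in edges r})%type.

(* k is a valence of an edge-magic labeling: a bijection
   f : V ∪ E -> [1, p+q] (encoded as a bijection onto 'I_(p+q), label = f + 1)
   with f(x) + f(xy) + f(y) = k for every edge xy. *)
Definition is_valence (V : finType) (r : rel V) (k : nat) : Prop :=
  exists f : lab_dom r -> 'I_#|{: lab_dom r}|,
    bijective f /\
    forall (x y : V) (hxy : [set x; y] \in edges r), r x y ->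
      (f (inl x)).+1 + (f (inr (exist _ [set x; y] hxy))).+1 + (f (inl y)).+1 = k.

Definition edge_magic (V : finType) (r : rel V) : Prop := exists k, is_valence r k.

Definition tau_card_ge (V : finType) (r : rel V) (M : nat) : Prop :=
  exists sq : seq nat, [/\ uniq sq, M <= size sq & forall k, k \in sq -> is_valence r k].

(* Bipartite graph G with stable sets X = 'I_s, Y = 'I_t and edges x_i y_j for E i j. *)
Definition bip_adj (s t : nat) (E : 'I_s -> 'I_t -> bool) : rel ('I_s + 'I_t) :=
  fun u v => match u, v with
             | inl i, inr j => E i j
             | inr j, inl i => E i j
             | _, _ => false
             end.

(* Vertices of S_{2n}(G;H1,H2): (w, None) is the original vertex w of G,
   (w, Some k) is the copy w^k, k in [1,n] encoded as 'I_n. *)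
Definition SV (s t n : nat) : finType := (('I_s + 'I_t) * option 'I_n)%type.

Definition S2n_dir (s t n : nat) (E E1 E2 : 'I_s -> 'I_t -> bool) : rel (SV s t n) :=
  fun u v => match u, v with
             | (inl i, None), (inr j, None) => E i j
             | (inl i, None), (inr j, Some _) => E1 i j     (* x_i y_j^k, x_iy_j in H1 *)
             | (inl i, Some _), (inr j, None) => E2 i j     (* x_i^k y_j, x_iy_j in H2 *)
             | _, _ => false
             end.

Definition S2n_adj (s t n : nat) (E E1 E2 : 'I_s -> 'I_t -> bool) : rel (SV s t n) :=
  fun u v => S2n_dir E E1 E2 u v || S2n_dir E E1 E2 v u.

From mathcomp Require Import all_boot zify.

Set Implicit Arguments. Unset Strict Implicit. Unset Printing Implicit Defensive.

(* Every vertex and every edge of G occurs in S_{2n}(G;H1,H2) exactly once at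
   each level d in [0, n]: the vertex w as w (d = 0) and as w^d, the edge
   x_i y_j as x_i y_j (d = 0) and as x_i y_j^d or x_i^d y_j according as it
   lies in H1 or H2.  Each edge of S_{2n} thus joins an original vertex to a
   vertex of its own level.  Shift an edge-magic labeling f of G to values in
   [0, p+q), so that its valence drops to k - 3; fix c in [0, n] and let pi be
   the transposition (0 c) of [0, n].  Labelling the level-d copy of a vertex
   v by (n+1) f(v) + pi(d) and that of an edge e by (n+1) f(e) + n - pi(d)
   gives a bijection onto [0, (n+1)(p+q)), and the digits along an edge of
   level d add up to pi(0) + pi(d) + n - pi(d) = c + n.  Hence each of the
   n+1 numbers (n+1)(k-3) + c + n + 3 is a valence of S_{2n}. *)

Lemma valence_labeling (V : finType) (r : rel V) k : is_valence r k ->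
  exists L : lab_dom r -> nat,
    [/\ injective L, forall w, L w < #|{: lab_dom r}|,
        (forall m, m < #|{: lab_dom r}| -> exists w, L w = m) &
        forall x y (hxy : [set x; y] \in edges r), r x y ->
          L (inl x) + L (inr (exist _ [set x; y] hxy)) + L (inl y) + 3 = k].
Proof.
case=> f [[finv fK Kf] f_val]; exists (fun w => val (f w)); split.
- by move=> w w' /val_inj /(can_inj fK).
- by move=> w; apply: ltn_ord.
- by move=> m m_lt; exists (finv (Ordinal m_lt)); rewrite Kf.
- by move=> x y hxy rxy; rewrite -(f_val x y hxy rxy) !addSn !addnS addn0.
Qed.

Lemma is_valence_of_labeling (V : finType) (r : rel V) (L : lab_dom r -> nat) N k :
  injective L -> (forall w, L w < N) -> (forall m, m < N -> exists w, L w = m) ->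
  (forall x y (hxy : [set x; y] \in edges r), r x y ->
     L (inl x) + L (inr (exist _ [set x; y] hxy)) + L (inl y) + 3 = k) ->
  is_valence r k.
Proof.
move=> L_inj L_lt L_surj L_val.
pose L' w := Ordinal (L_lt w).
have L'_inj : injective L' by move=> w w' /(congr1 val) /L_inj.
have card_dom : N = #|{: lab_dom r}|.
  have imL' : L' @: setT = setT.
    apply/setP => m; rewrite inE; have [w Lw] := L_surj m (ltn_ord m).
    by apply/imsetP; exists w; rewrite ?inE //; apply: val_inj.
  by have := card_imset [set: lab_dom r] L'_inj; rewrite imL' !cardsT card_ord.
exists (fun w => cast_ord card_dom (L' w)); split.
  apply: inj_card_bij; last by rewrite card_ord -card_dom.
  by move=> w w' /(congr1 val) /L_inj.
by move=> x y hxy rxy /=; rewrite -(L_val x y hxy rxy) !addSn !addnS addn0.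
Qed.

Lemma set2_edges (V : finType) (r : rel V) x y : r x y -> [set x; y] \in edges r.
Proof.
by move=> rxy; rewrite inE; apply/existsP; exists x; apply/existsP; exists y; rewrite rxy eqxx.
Qed.

Lemma edges_set2 (V : finType) (r : rel V) A :
  A \in edges r -> exists x y, r x y /\ A = [set x; y].
Proof. by rewrite inE => /existsP[x /existsP[y /andP[rxy /eqP ->]]]; exists x, y. Qed.

(* Junk value 0 when A is not an edge. *)
Definition edge_lab (V : finType) (r : rel V) (g : lab_dom r -> nat) (A : {set V}) : nat :=
  if insub A is Some a then g (inr a) else 0.

Lemma edge_labE (V : finType) (r : rel V) (g : lab_dom r -> nat) A (hA : A \in edges r) :
  edge_lab g A = g (inr (exist _ A hA)).
Proof. by rewrite /edge_lab insubT. Qed.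

Lemma bip_edges_set2 s t (E : 'I_s -> 'I_t -> bool) A :
  A \in edges (bip_adj E) -> exists i j, E i j /\ A = [set inl i; inr j].
Proof.
move=> /edges_set2[[i|j] [[i'|j'] [Eij ->]]] //; first by exists i, j'.
by exists i', j; rewrite setUC.
Qed.

Lemma set2_sum_inj (A B : finType) (i i' : A) (j j' : B) :
  [set inl i; inr j] = [set inl i'; inr j'] :> {set A + B} -> i = i' /\ j = j'.
Proof.
move=> e.
have : (inl i : A + B) \in [set inl i'; inr j'] by rewrite -e set21.
have : (inr j : A + B) \in [set inl i'; inr j'] by rewrite -e set22.
by rewrite !in_set2 => /orP[/eqP //|/eqP [->]] /orP[/eqP [->]|/eqP].
Qed.

Definition swap0 (c a : nat) : nat := if a == 0 then c else if a == c then 0 else a.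

Lemma swap0K c : involutive (swap0 c).
Proof.
move=> a; rewrite /swap0.
have [->|a0] := eqVneq a 0.
  by have [->|c0] := eqVneq c 0; rewrite ?eqxx // (negPf c0) eqxx.
by have [->|ac] := eqVneq a c; rewrite ?eqxx ?(negPf a0) ?(negPf ac).
Qed.

Lemma swap0_le c n a : c <= n -> a <= n -> swap0 c a <= n.
Proof. by rewrite /swap0; case: (a == 0) => //; case: (a == c). Qed.

Lemma radix_ltn n a b r : a < b -> r <= n -> n.+1 * a + r < n.+1 * b.
Proof.
by move=> ab rn; apply: (@leq_trans (n.+1 * a.+1)); rewrite ?leq_mul2l // mulnS; lia.
Qed.

Lemma radix_inj n a b r r' : r <= n -> r' <= n ->
  n.+1 * a + r = n.+1 * b + r' -> a = b /\ r = r'.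
Proof.
move=> rn r'n e; suff ab : a = b by split=> //; move: e; rewrite ab; lia.
have := congr1 (divn^~ n.+1) e.
by rewrite ![n.+1 * _]mulnC !divnMDl // !divn_small ?ltnS // !addn0.
Qed.

Definition level n (o : option 'I_n) : nat := if o is Some k then k.+1 else 0.

Lemma level_le n (o : option 'I_n) : level o <= n.
Proof. by case: o => [[k hk]|]. Qed.

Lemma level_inj n : injective (@level n).
Proof. by case=> [a|] [b|] //= [] /val_inj ->. Qed.

Definition of_level n d : option 'I_n := if d is d'.+1 then insub d' else None.

Lemma of_levelK n d : d <= n -> level (of_level n d) = d.
Proof. by case: d => //= d dn; rewrite insubT. Qed.

Section S2n.

Variables (s t n : nat) (E E1 E2 : 'I_s -> 'I_t -> bool).
Hypothesis Hdec : forall i j, E i j = E1 i j || E2 i j.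
Hypothesis Hdisj : forall i j, ~~ (E1 i j && E2 i j).

Local Notation G := (bip_adj E).
Local Notation S := (@S2n_adj s t n E E1 E2).
Local Notation dir := (@S2n_dir s t n E E1 E2).

Lemma S2n_dir_shape u v : dir u v ->
  exists i ox j oy, u = (inl i, ox) /\ v = (inr j, oy).
Proof. by case: u v => [[i|j] [ox|]] [[i'|j'] [oy|]] //= _; do 4 eexists. Qed.

Lemma S2n_dir_E i ox j oy : dir (inl i, ox) (inr j, oy) -> E i j.
Proof. by case: ox oy => [a|] [b|] //= h; rewrite Hdec h ?orbT. Qed.

Lemma S2n_dir_level i ox j oy : dir (inl i, ox) (inr j, oy) -> level ox = 0 \/ level oy = 0.
Proof. by case: ox oy => [a|] [b|] //=; auto. Qed.

Lemma S2n_dir_level_le i ox j oy : dir (inl i, ox) (inr j, oy) -> level ox + level oy <= n.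
Proof. by case/S2n_dir_level=> ->; rewrite ?addn0 level_le. Qed.

Lemma S2n_dir_inj i j ox oy ox' oy' :
  dir (inl i, ox) (inr j, oy) -> dir (inl i, ox') (inr j, oy') ->
  level ox + level oy = level ox' + level oy' -> ox = ox' /\ oy = oy'.
Proof.
have := Hdisj i j.
case: ox oy ox' oy' => [a|] [b|] [a'|] [b'|] //=; rewrite ?addn0 // => E12 h h';
  by [case=> /val_inj -> | move: E12; rewrite h h'].
Qed.

Lemma S2n_dir_lift i j d : E i j -> d <= n ->
  exists ox oy, dir (inl i, ox) (inr j, oy) /\ level ox + level oy = d.
Proof.
move=> Eij dn; case E1ij: (E1 i j).
  exists None, (of_level n d); rewrite of_levelK //.
  by split=> //; case: (of_level n d).
have E2ij : E2 i j by move: Eij; rewrite Hdec E1ij.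
exists (of_level n d), None; rewrite of_levelK ?addn0 //.
by split=> //; case: (of_level n d).
Qed.

Lemma S2n_edges_set2 A : A \in edges S ->
  exists i ox j oy, dir (inl i, ox) (inr j, oy) /\ A = [set (inl i, ox); (inr j, oy)].
Proof.
move=> /edges_set2[x [y []]].
have oriented u v : dir u v -> A = [set u; v] -> exists i ox j oy,
    dir (inl i, ox) (inr j, oy) /\ A = [set (inl i, ox); (inr j, oy)].
  by move=> huv ->; have [i [ox [j [oy [eu ev]]]]] := S2n_dir_shape huv; subst; exists i, ox, j, oy.
by case/orP=> [hxy|hyx] eA; [apply: oriented hxy eA | apply: oriented hyx _; rewrite eA setUC].
Qed.

Section Labeling.

Variables (g : lab_dom G -> nat) (c : nat).

(* An edge A of S_{2n} lies over the edge [set u.1 | u in A] of G, and its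
   level is the sum of the levels of its endpoints, one of which is 0. *)
Definition S2n_lab (w : lab_dom S) : nat :=
  match w with
  | inl (v, o) => n.+1 * g (inl v) + swap0 c (level o)
  | inr A => n.+1 * edge_lab g [set u.1 | u in val A]
             + (n - swap0 c (\sum_(u in val A) level u.2))
  end.

Lemma S2n_lab_edge i ox j oy (h : [set (inl i, ox); (inr j, oy)] \in edges S) :
  S2n_lab (inr (exist _ [set (inl i, ox); (inr j, oy)] h))
  = n.+1 * edge_lab g [set inl i; inr j] + (n - swap0 c (level ox + level oy)).
Proof. by rewrite /= imsetU1 imset_set1 big_setU1 ?big_set1 // in_set1. Qed.

Variables (P k : nat).
Hypothesis g_inj : injective g.
Hypothesis g_lt : forall z, g z < P.
Hypothesis g_surj : forall m, m < P -> exists z, g z = m.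
Hypothesis g_val : forall x y (hxy : [set x; y] \in edges G), G x y ->
  g (inl x) + g (inr (exist _ [set x; y] hxy)) + g (inl y) + 3 = k.
Hypothesis c_le : c <= n.

Lemma S2n_lab_edgeP (a : {A | A \in edges S}) :
  exists i ox j oy (hG : [set inl i; inr j] \in edges G),
    [/\ val a = [set (inl i, ox); (inr j, oy)], dir (inl i, ox) (inr j, oy) &
        S2n_lab (inr a) = n.+1 * g (inr (exist (fun A => A \in edges G) _ hG))
                          + (n - swap0 c (level ox + level oy))].
Proof.
case: a => A hA; have [i [ox [j [oy [hd eA]]]]] := S2n_edges_set2 hA; subst A.
have hG : [set inl i; inr j] \in edges G by apply: set2_edges; apply: S2n_dir_E hd.
by exists i, ox, j, oy, hG; rewrite S2n_lab_edge (edge_labE g hG).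
Qed.

Lemma S2n_lab_lt w : S2n_lab w < n.+1 * P.
Proof.
case: w => [[v o]|a]; first exact: radix_ltn (g_lt _) (swap0_le c_le (level_le o)).
have [i [ox [j [oy [hG [_ _ ->]]]]]] := S2n_lab_edgeP a.
exact: radix_ltn (g_lt _) (leq_subr _ _).
Qed.

Lemma S2n_lab_inj : injective S2n_lab.
Proof.
have vdigit_le o : swap0 c (@level n o) <= n := swap0_le c_le (level_le o).
case=> [[v o]|a] [[v' o']|a'].
- move=> /= e; have [/g_inj [->]] := radix_inj (vdigit_le o) (vdigit_le o') e.
  by move=> /(can_inj (swap0K c)) /level_inj ->.
- have [i [ox [j [oy [hG [_ _ ->]]]]]] := S2n_lab_edgeP a'.
  by move=> /= e; have [/g_inj] := radix_inj (vdigit_le o) (leq_subr _ _) e.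
- have [i [ox [j [oy [hG [_ _ ->]]]]]] := S2n_lab_edgeP a.
  by move=> /= e; have [/g_inj] := radix_inj (leq_subr _ _) (vdigit_le o') e.
have [i [ox [j [oy [hG [ea hd ->]]]]]] := S2n_lab_edgeP a.
have [i' [ox' [j' [oy' [hG' [ea' hd' ->]]]]]] := S2n_lab_edgeP a'.
move=> e; have [/g_inj [/set2_sum_inj [ei ej]] ed] := radix_inj (leq_subr _ _) (leq_subr _ _) e.
subst i' j'.
have el : level ox + level oy = level ox' + level oy'.
  apply: (can_inj (swap0K c)); move: ed.
  by move: (swap0_le c_le (S2n_dir_level_le hd)) (swap0_le c_le (S2n_dir_level_le hd')); lia.
have [eox eoy] := S2n_dir_inj hd hd' el; subst ox' oy'.
by congr inr; apply: val_inj; rewrite ea ea'.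
Qed.

Lemma S2n_lab_surj m : m < n.+1 * P -> exists w, S2n_lab w = m.
Proof.
move=> m_lt.
have q_lt : m %/ n.+1 < P by rewrite ltn_divLR // mulnC.
have r_le : m %% n.+1 <= n by rewrite -ltnS ltn_mod.
have m_eq : m = n.+1 * (m %/ n.+1) + m %% n.+1 by rewrite mulnC -divn_eq.
have [[v|[A hA]] gz] := g_surj q_lt.
  exists (inl (v, of_level n (swap0 c (m %% n.+1)))).
  by rewrite /= of_levelK ?swap0_le // swap0K gz -m_eq.
have [i [j [Eij eA]]] := bip_edges_set2 hA.
have d_le : swap0 c (n - m %% n.+1) <= n by rewrite swap0_le ?leq_subr.
have [ox [oy [hd ld]]] := S2n_dir_lift Eij d_le.
have hS : [set (inl i, ox); (inr j, oy)] \in edges S by apply: set2_edges; rewrite /S2n_adj hd.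
pose a := exist (fun A => A \in edges S) _ hS.
exists (inr a); rewrite S2n_lab_edge ld swap0K subKn //.
by rewrite -eA (edge_labE g hA) gz -m_eq.
Qed.

Lemma S2n_lab_sum x y (hxy : [set x; y] \in edges S) : S x y ->
  S2n_lab (inl x) + S2n_lab (inr (exist _ [set x; y] hxy)) + S2n_lab (inl y) + 3
  = n.+1 * (k - 3) + c + n + 3.
Proof.
have oriented u v (huv : [set u; v] \in edges S) : dir u v ->
    S2n_lab (inl u) + S2n_lab (inr (exist _ [set u; v] huv)) + S2n_lab (inl v)
    = n.+1 * (k - 3) + c + n.
  move=> hd; have [i [ox [j [oy [eu ev]]]]] := S2n_dir_shape hd; subst u v.
  have Eij := S2n_dir_E hd.
  have hG : [set inl i; inr j] \in edges G by apply: set2_edges.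
  rewrite S2n_lab_edge (edge_labE g hG) /=.
  have := g_val hG Eij.
  set gx := g (inl (inl i)); set ge := g (inr _); set gy := g (inl (inr j)) => k_eq.
  have -> : k - 3 = gx + ge + gy by lia.
  have swap00 : swap0 c 0 = c by [].
  have := swap0_le c_le (S2n_dir_level_le hd); rewrite !mulnDr.
  by case: (S2n_dir_level hd) => ->; rewrite ?add0n ?addn0 swap00; lia.
rewrite /S2n_adj => /orP[hd|hd]; first by rewrite oriented.
have hyx : [set y; x] \in edges S by rewrite setUC.
rewrite (_ : exist _ [set x; y] hxy = exist _ [set y; x] hyx); last first.
  by apply: val_inj; rewrite /= setUC.
have := oriented _ _ hyx hd.
by set ex := S2n_lab (inl x); set ey := S2n_lab (inl y); set exy := S2n_lab (inr _); lia.
Qed.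

End Labeling.

Lemma S2n_valence k c : c <= n -> is_valence G k ->
  is_valence S (n.+1 * (k - 3) + c + n + 3).
Proof.
move=> c_le /valence_labeling[g [g_inj g_lt g_surj g_val]].
apply: (@is_valence_of_labeling _ _ (S2n_lab g c) (n.+1 * #|{: lab_dom G}|)).
- exact: S2n_lab_inj.
- exact: S2n_lab_lt.
- exact: S2n_lab_surj.
- exact: S2n_lab_sum.
Qed.

End S2n.

Theorem mainTheorem13 (s t : nat) (E E1 E2 : 'I_s -> 'I_t -> bool)
  (Hdec : forall i j, E i j = E1 i j || E2 i j)
  (Hdisj : forall i j, ~~ (E1 i j && E2 i j))
  (Hmagic : edge_magic (bip_adj E)) :
  forall M : nat, exists N : nat, forall n : nat, N <= n ->
    tau_card_ge (@S2n_adj s t n E E1 E2) M.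
Proof.
move=> M; exists M => n le_Mn; have [k Gk] := Hmagic.
exists [seq n.+1 * (k - 3) + c + n + 3 | c <- iota 0 n.+1]; split.
- by rewrite map_inj_uniq ?iota_uniq // => c c'; lia.
- by rewrite size_map size_iota leqW.
- move=> v /mapP[c]; rewrite mem_iota ltnS => /andP[_ c_le] ->.
  exact: S2n_valence.
Qed.
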